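(* Let $R$ be a finite commutative ring with identity, and let $f=\frac{1}{1-X}=\sum_{k\ge 0}X^k\in R[[X]]$. Then the $\omega$-sequential function $\mu[f]:R[[X]]\to R[[X]],\ g\mapsto fg$ is finite state, and its set of remainders is $Q_{\mu[f]}=\{\,g\mapsto f\cdot(s+g)\ \mid\ s\in R\,\}$.
   Context: Identify $R^\omega$ (infinite words over the alphabet $R$) with $R[[X]]$ via $(a_0,a_1,\dots)\mapsto\sum_k a_kX^k$. For infinite words $x$, $x[0,n]$ denotes its prefix of length $n$. A map $\zeta:A^\omega\to B^\omega$ is $\omega$-sequential if whenever a finite word $u$ is a common prefix of $x$ and $y$, then $\zeta(x)[0,|u|]=\zeta(y)[0,|u|]$. For such $\zeta$ and a finite word $u$, write $\zeta(ux)=\epsilon(u)\zeta_u(x)$ for all $x\in A^\omega$, where $\epsilon(u)=\zeta(ux)[0,|u|]$ (independent of $x$) and $\zeta_u:A^\omega\to B^\omega$; $\zeta_u$ is the remainder of $\zeta$ for $u$. The set of remainders is $Q_\zeta=\{\zeta_u\mid u\in A^*\}$, and $\zeta$ is called finite state if $Q_\zeta$ is finite. *)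

From mathcomp Require Import all_boot all_order all_algebra.
From Stdlib Require List.
Set Implicit Arguments. Unset Strict Implicit. Unset Printing Implicit Defensive.
Import GRing.Theory.
Local Open Scope ring_scope.

(* Infinite words over A, identified with formal power series A[[X]]:
   the word (a_0,a_1,...) is the function k |-> a_k. *)
Definition iword (A : Type) := nat -> A.

Definition wprefix (A : Type) (x : iword A) (n : nat) : seq A := mkseq x n.

Definition wcat (A : Type) (u : seq A) (x : iword A) : iword A :=
  fun n => if (n < size u)%N then nth (x 0%N) u n else x (n - size u)%N.

Definition omega_sequential (A B : Type) (zeta : iword A -> iword B) : Prop :=
  forall (u : seq A) (x y : iword A),
    wprefix (zeta (wcat u x)) (size u) = wprefix (zeta (wcat u y)) (size u).

(* remainder zeta_u : zeta (u x) = eps(u) zeta_u(x), with |eps(u)| = |u| *)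
Definition remainder (A B : Type) (zeta : iword A -> iword B) (u : seq A)
  : iword A -> iword B :=
  fun x n => zeta (wcat u x) (n + size u)%N.

Definition remainders (A B : Type) (zeta : iword A -> iword B)
  : (iword A -> iword B) -> Prop :=
  fun q => exists u : seq A, q = remainder zeta u.

Definition finite_state (A B : Type) (zeta : iword A -> iword B) : Prop :=
  exists l : seq (iword A -> iword B),
    forall q, remainders zeta q -> List.In q l.

Definition ps_mul (R : pzRingType) (a b : iword R) : iword R :=
  fun n => \sum_(i < n.+1) a i * b (n - i)%N.
Definition ps_add (R : pzRingType) (a b : iword R) : iword R :=
  fun n => a n + b n.
Definition ps_const (R : pzRingType) (s : R) : iword R :=
  fun n => if n == 0%N then s else 0.

Definition mu (R : pzRingType) (f : iword R) : iword R -> iword R :=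
  fun g => ps_mul f g.

(* f = 1/(1-X) = sum_k X^k *)
Definition geom (R : pzRingType) : iword R := fun _ => 1.

(* Multiplication by 1/(1-X) turns g into the sequence of its prefix sums
   g_0 + ... + g_n.  Hence the n-th output only depends on g_0 .. g_n, and
   after reading a prefix u the remaining outputs are the prefix sums of the
   rest of the input shifted by the digit sum s of u, i.e. the remainder is
   g |-> f (s + g).  For finite R there are at most |R| such maps. *)
From mathcomp Require Import all_boot all_algebra.
From Stdlib Require Import FunctionalExtensionality.
Set Implicit Arguments. Unset Strict Implicit.
Import GRing.Theory.
Local Open Scope ring_scope.

Lemma mem_In (T : eqType) (x : T) (s : seq T) : x \in s -> List.In x s.
Proof.
by elim: s => //= y s IHs; rewrite inE => /orP [/eqP ->|/IHs]; [left | right].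
Qed.

Lemma finite_state_param (A B : Type) (T : finType) (zeta : iword A -> iword B)
    (phi : T -> iword A -> iword B) :
  (forall q, remainders zeta q -> exists t, q = phi t) -> finite_state zeta.
Proof.
move=> rem_phi; exists (map phi (enum T)) => q /rem_phi [t ->].
by apply/List.in_map/mem_In; rewrite mem_enum.
Qed.

Section Concatenation.

Variables (A : Type) (u : seq A) (x : iword A).

Lemma wcat_lt (a : A) (i : nat) : (i < size u)%N -> wcat u x i = nth a u i.
Proof. by move=> i_lt_u; rewrite /wcat i_lt_u; apply: set_nth_default. Qed.

Lemma wcat_addl (n : nat) : wcat u x (size u + n) = x n.
Proof. by rewrite /wcat ltnNge leq_addr /= addKn. Qed.

End Concatenation.

Arguments wcat_lt {A u x} a {i}.

Section MultiplicationMap.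

Variable R : pzRingType.

Lemma mu_omega_sequential (f : iword R) : omega_sequential (mu f).
Proof.
move=> u x y; apply/eq_in_map => n; rewrite mem_iota add0n => /= n_lt_u.
apply: eq_bigr => i _; congr (_ * _).
have i_lt_u : (n - i < size u)%N by rewrite (leq_ltn_trans (leq_subr i n)).
by rewrite !(wcat_lt 0).
Qed.

Lemma mu_geomE (g : iword R) (n : nat) : mu (geom R) g n = \sum_(i < n.+1) g i.
Proof.
rewrite /mu /ps_mul (reindex_inj rev_ord_inj); apply: eq_bigr => i _.
by rewrite mul1r /= subSS subKn // -ltnS.
Qed.

Lemma remainder_mu_geom (u : seq R) :
  remainder (mu (geom R)) u =
  (fun g => mu (geom R) (ps_add (ps_const (\sum_(a <- u) a)) g)).
Proof.
apply: functional_extensionality => g; apply: functional_extensionality => n.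
rewrite /remainder !mu_geomE -addSn (addnC n.+1) big_split_ord big_split /=.
congr (_ + _).
- rewrite big_ord_recl big1_eq addr0 (big_nth 0) big_mkord.
  by apply: eq_bigr => i _; rewrite (wcat_lt 0).
- by apply: eq_bigr => i _; rewrite wcat_addl.
Qed.

Lemma remainders_mu_geom (q : iword R -> iword R) :
  remainders (mu (geom R)) q <->
  exists s : R, q = (fun g => mu (geom R) (ps_add (ps_const s) g)).
Proof.
split=> [[u ->]|[s ->]]; first by exists (\sum_(a <- u) a); rewrite remainder_mu_geom.
by exists [:: s]; rewrite remainder_mu_geom big_seq1.
Qed.

End MultiplicationMap.

Theorem theorem7p14 (R : finComPzRingType) :
  omega_sequential (mu (geom R)) /\
  finite_state (mu (geom R)) /\
  (forall q : iword R -> iword R,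
     remainders (mu (geom R)) q <->
     exists s : R, q = (fun g => mu (geom R) (ps_add (ps_const s) g))).
Proof.
split; first exact: mu_omega_sequential.
split; last exact: remainders_mu_geom.
apply: (finite_state_param (phi := fun (s : R) g => mu (geom R) (ps_add (ps_const s) g))).
by move=> q /remainders_mu_geom.
Qed.
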